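(* In the discrete setting of the context, let $\varphi$ be a twice continuously differentiable convex function on $(0,+\infty)$, let $(\rho_K^n)_{K\in\mathcal M,0\le n\le N}$ be positive, $\rho_\sigma^n$ face densities and $u_{K,\sigma}^n$ normal velocities, $F_{K,\sigma}^n=|\sigma|\rho_\sigma^nu_{K,\sigma}^n$, and define for $K\in\mathcal M$, $0\le n\le N-1$, \[ |K|\,R_K^{n+1}=\bigl(\varphi'(\rho_K^{n+1})-\varphi'(\rho_K^n)\bigr)\sum_{\sigma\in\mathcal{E}(K)}F_{K,\sigma}^n. \] Let $M>1$ and suppose $\rho_K^n\le M$, $1/\rho_K^n\le M$ and $|u_{K,\sigma}^n|\le M$ for all $K$, $\sigma\in\mathcal{E}(K)$, $0\le n\le N$. Let $|\varphi''|_\infty$ be the maximum of $\varphi''$ on $[1/M,M]$. Then \[ \|R\|_{L^1}:=\sum_{n=0}^{N-1}\delta t\sum_{K\in\mathcal M}|K|\,|R_K^{n+1}|\le M^2\,|\varphi''|_\infty\,\|\rho\|_{t,BV}\,\frac{\delta t}{\underline h_{\mathcal M}}. \]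
   Context: Setting: $\Omega\subset\mathbb{R}^d$ bounded, $\mathcal M$ a polytopal mesh with cells $K$, faces of $K$ denoted $\mathcal E(K)$, measures $|K|$, $|\sigma|$; uniform time step $\delta t$, times $t_n$, $0\le n\le N$. $\underline h_{\mathcal M}=\min_{K\in\mathcal M}|K|/\sum_{\sigma\in\mathcal{E}(K)}|\sigma|$. Time BV semi-norm: $\|z\|_{t,BV}=\sum_{n=0}^{N-1}\sum_{K\in\mathcal M}|K|\,|z_K^{n+1}-z_K^n|$. *)

From HB Require Import structures.
From mathcomp Require Import all_boot all_order all_algebra.
From mathcomp Require Import all_classical all_reals all_analysis.
Set Implicit Arguments. Unset Strict Implicit. Unset Printing Implicit Defensive.
Import Order.TTheory GRing.Theory Num.Theory numFieldNormedType.Exports.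
Local Open Scope ring_scope.

(* Discrete mesh: cells of type [cell], faces of type [face], E K = faces of K,
   vol K = |K|, area s = |sigma|. *)

Definition C2_pos {R : realType} (phi : R -> R) : Prop :=
  (forall x : R, 0 < x -> derivable phi x 1) /\
  (forall x : R, 0 < x -> derivable (derive1 phi) x 1) /\
  (forall x : R, 0 < x -> {for x, continuous (derive1 (derive1 phi) : R -> R)}).

Definition convex_pos {R : realType} (phi : R -> R) : Prop :=
  forall x y t : R, 0 < x -> 0 < y -> 0 <= t <= 1 ->
    phi (t * x + (1 - t) * y) <= t * phi x + (1 - t) * phi y.

Definition hmin {R : realType} {cell face : finType} (K0 : cell)
  (E : cell -> {set face}) (vol : cell -> R) (area : face -> R) : R :=
  \big[Num.min/(vol K0 / \sum_(s in E K0) area s)]_(K : cell)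
      (vol K / \sum_(s in E K) area s).

Definition flux {R : realType} {cell face : finType} (area : face -> R)
  (rhos : nat -> face -> R) (u : nat -> cell -> face -> R)
  (n : nat) (K : cell) (s : face) : R :=
  area s * rhos n s * u n K s.

(* R_K^{n+1} defined by |K| R_K^{n+1} = (phi'(rho_K^{n+1}) - phi'(rho_K^n)) sum F *)
Definition resid {R : realType} {cell face : finType} (phi : R -> R)
  (E : cell -> {set face}) (vol : cell -> R) (area : face -> R)
  (rho : nat -> cell -> R) (rhos : nat -> face -> R)
  (u : nat -> cell -> face -> R) (n : nat) (K : cell) : R :=
  ((derive1 phi) (rho n.+1 K) - (derive1 phi) (rho n K)) *
    (\sum_(s in E K) flux area rhos u n K s) / vol K.

Definition resid_L1 {R : realType} {cell face : finType} (phi : R -> R)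
  (E : cell -> {set face}) (vol : cell -> R) (area : face -> R)
  (rho : nat -> cell -> R) (rhos : nat -> face -> R)
  (u : nat -> cell -> face -> R) (N : nat) (dt : R) : R :=
  \sum_(n < N) dt * \sum_(K : cell) vol K * `|resid phi E vol area rho rhos u n K|.

Definition tBV {R : realType} {cell : finType} (vol : cell -> R)
  (z : nat -> cell -> R) (N : nat) : R :=
  \sum_(n < N) \sum_(K : cell) vol K * `|z n.+1 K - z n K|.

From HB Require Import structures.
From mathcomp Require Import all_boot all_order all_algebra.
From mathcomp Require Import all_classical all_reals all_analysis.
From mathcomp Require Import ring lra.
Set Implicit Arguments.
Unset Strict Implicit.
Unset Printing Implicit Defensive.
Import Order.TTheory GRing.Theory Num.Theory numFieldNormedType.Exports.
Local Open Scope classical_set_scope.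
Local Open Scope ring_scope.

(* Per time step and cell, |K| |R_K^{n+1}| is the product of a jump of
   phi' and a total flux.  Convexity makes phi' nondecreasing, so by the mean
   value theorem its jump is at most |phi''|_oo |rho_K^{n+1} - rho_K^n|; the
   flux is at most M^2 sum_sigma |sigma| <= M^2 |K| / h.  Summing over cells
   and time steps gives the time BV semi-norm. *)

Section ConvexDerivative.
Variables (R : realType) (phi : R -> R).
Hypothesis phi_convex : convex_pos phi.

Lemma convex_pos_tangent_le x y : 0 < x -> 0 < y -> derivable phi x 1 ->
  derive1 phi x * (y - x) <= phi y - phi x.
Proof.
move=> x_gt0 y_gt0 dphi.
have dfx : differentiable phi x by apply/derivable1_diffP.
have Dv : 'D_(y - x) phi x = derive1 phi x * (y - x).
  by rewrite deriveE // deriv1E // mulrC.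
have dv : derivable phi x (y - x) by exact: diff_derivable.
set v := y - x in Dv dv *.
set g := fun h : R => h^-1 *: ((phi \o shift x) (h *: v) - phi x).
have g_right : g @ 0^'+ --> 'D_v phi x.
  apply: cvg_trans (dv : g @ 0^' --> _); apply: cvg_app.
  by apply: within_subset => // z /= z_gt0; rewrite gt_eqF.
rewrite -Dv -(cvg_lim _ g_right) //; apply: limr_le; first exact: cvgP g_right.
near=> h.
have h_gt0 : 0 < h by near: h; exact: nbhs_right_gt.
have h_lt1 : h < 1 by near: h; exact: nbhs_right_lt.
have chord : phi (h * y + (1 - h) * x) <= h * phi y + (1 - h) * phi x.
  by apply: phi_convex; rewrite // ltW // ltW.
rewrite /g /= /shift /=.
have -> : h *: v + x = h * y + (1 - h) * x by rewrite /v /GRing.scale /=; ring.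
(* the difference quotient of a convex function is below the chord slope *)
change (h^-1 * (phi (h * y + (1 - h) * x) - phi x) <= phi y - phi x).
rewrite ler_pdivrMl //; nra.
Unshelve. all: by end_near. Qed.

Lemma convex_pos_derive1_le x y : 0 < x -> x <= y ->
  derivable phi x 1 -> derivable phi y 1 -> derive1 phi x <= derive1 phi y.
Proof.
move=> x_gt0 le_xy dx dy; have y_gt0 : 0 < y by exact: lt_le_trans le_xy.
have tx := convex_pos_tangent_le x_gt0 y_gt0 dx.
have ty := convex_pos_tangent_le y_gt0 x_gt0 dy.
have [-> // | lt_xy] := eqVneq x y.
have yx_gt0 : 0 < y - x by rewrite subr_gt0 lt_neqAle lt_xy.
rewrite -subr_ge0 -(pmulr_rge0 _ yx_gt0); nra.
Qed.

Hypothesis phi_C2 : C2_pos phi.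
Variables (lo hi m : R).
Hypothesis lo_gt0 : 0 < lo.
Hypothesis derive2_le : forall x, lo <= x <= hi -> derive1 (derive1 phi) x <= m.

Lemma derive1_sub_le a b : lo <= b -> b <= a -> a <= hi ->
  0 <= derive1 phi a - derive1 phi b <= m * (a - b).
Proof.
have [d1 [d2 _]] := phi_C2; move=> lo_b le_ba a_hi.
have b_gt0 : 0 < b by exact: lt_le_trans lo_b.
have a_gt0 : 0 < a by exact: lt_le_trans le_ba.
rewrite subr_ge0 (convex_pos_derive1_le b_gt0 le_ba (d1 _ b_gt0) (d1 _ a_gt0)) /=.
have dd z : z \in `]b, a[ -> is_derive z 1 (derive1 phi) (derive1 (derive1 phi) z).
  move=> zba; rewrite derive1E; apply/derivableP/d2.
  by apply: lt_trans b_gt0 _; rewrite (itvP zba).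
have cc : {within `[b, a], continuous (derive1 phi)}.
  apply: derivable_within_continuous => z zba; apply: d2.
  by apply: lt_le_trans b_gt0 _; rewrite (itvP zba).
have [c cba ->] := MVT_segment le_ba dd cc.
rewrite ler_wpM2r ?subr_ge0 // derive2_le //.
by rewrite (le_trans lo_b) ?(le_trans _ a_hi) // (itvP cba).
Qed.

Lemma derive1_dist_le a b : lo <= a <= hi -> lo <= b <= hi ->
  `|derive1 phi a - derive1 phi b| <= m * `|a - b|.
Proof.
wlog le_ba : a b / b <= a => [hwlog|] /andP[lo_a a_hi] /andP[lo_b b_hi].
  have [le_ba|/ltW le_ab] := leP b a; first by apply: hwlog; rewrite ?lo_a ?lo_b.
  by rewrite distrC [`|a - b|]distrC; apply: hwlog; rewrite ?lo_a ?lo_b.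
have /andP[D_ge0 D_le] := derive1_sub_le lo_b le_ba a_hi.
by rewrite !ger0_norm // subr_ge0.
Qed.

End ConvexDerivative.

Section Mesh.
Variables (R : realType) (cell face : finType) (K0 : cell).
Variables (E : cell -> {set face}) (vol : cell -> R) (area : face -> R).
Hypothesis vol_gt0 : forall K, 0 < vol K.
Hypothesis area_gt0 : forall s, 0 < area s.
Hypothesis faces_neq0 : forall K, exists s, s \in E K.

Lemma sum_area_gt0 K : 0 < \sum_(s in E K) area s.
Proof.
have [s sK] := faces_neq0 K.
rewrite (bigD1 s) //= ltr_pwDl // sumr_ge0 // => t _; exact: ltW.
Qed.

Lemma hmin_gt0 : 0 < hmin K0 E vol area.
Proof.
apply: (big_ind (fun x => 0 < x)) => [|a b a_gt0 b_gt0|K _].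
- by rewrite divr_gt0 ?sum_area_gt0.
- by rewrite lt_min a_gt0 b_gt0.
- by rewrite divr_gt0 ?sum_area_gt0.
Qed.

Lemma sum_area_le_hmin K :
  \sum_(s in E K) area s <= vol K / hmin K0 E vol area.
Proof.
have : hmin K0 E vol area <= vol K / \sum_(s in E K) area s by exact: bigmin_le.
by rewrite ler_pdivlMr ?sum_area_gt0 // ler_pdivlMr ?hmin_gt0 // mulrC.
Qed.

End Mesh.

Lemma norm_sum_flux_le (R : realType) (cell face : finType) (E : cell -> {set face})
  (area : face -> R) (rhos : nat -> face -> R) (u : nat -> cell -> face -> R)
  (n : nat) (K : cell) (M : R) :
  (forall s, 0 <= area s) ->
  (forall s, s \in E K -> `|rhos n s| <= M /\ `|u n K s| <= M) ->
  `|\sum_(s in E K) flux area rhos u n K s| <= M ^+ 2 * \sum_(s in E K) area s.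
Proof.
move=> area_ge0 bounds; rewrite mulr_sumr (le_trans (ler_norm_sum _ _ _)) //.
apply: ler_sum => s sK; have [rhos_M u_M] := bounds s sK.
have M_ge0 : 0 <= M by exact: le_trans u_M.
rewrite /flux !normrM ger0_norm // [_ * area s]mulrC -mulrA ler_wpM2l //.
by rewrite expr2 ler_pM.
Qed.

Lemma vol_mul_norm_resid (R : realType) (cell face : finType) (phi : R -> R)
  (E : cell -> {set face}) (vol : cell -> R) (area : face -> R)
  (rho : nat -> cell -> R) (rhos : nat -> face -> R)
  (u : nat -> cell -> face -> R) (n : nat) (K : cell) :
  0 < vol K ->
  vol K * `|resid phi E vol area rho rhos u n K| =
    `|derive1 phi (rho n.+1 K) - derive1 phi (rho n K)| *
    `|\sum_(s in E K) flux area rhos u n K s|.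
Proof.
by move=> vol_gt0; rewrite /resid normf_div (gtr0_norm vol_gt0) normrM mulrC divfK ?gt_eqF.
Qed.

Theorem lemma3p3 (R : realType) (cell face : finType) (K0 : cell)
  (E : cell -> {set face}) (vol : cell -> R) (area : face -> R)
  (N : nat) (dt : R) (phi : R -> R)
  (rho : nat -> cell -> R) (rhos : nat -> face -> R)
  (u : nat -> cell -> face -> R) (M phi2max : R) :
  (forall K, 0 < vol K) ->
  (forall s, 0 < area s) ->
  (forall K, exists s, s \in E K) ->
  0 < dt ->
  C2_pos phi -> convex_pos phi ->
  (forall n K, (n <= N)%N -> 0 < rho n K) ->
  (* face densities are interpolates of cell densities *)
  (forall n K s, (n <= N)%N -> s \in E K ->
     exists L L' : cell, rho n L <= rhos n s <= rho n L') ->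
  1 < M ->
  (forall n K, (n <= N)%N -> rho n K <= M /\ 1 / rho n K <= M) ->
  (forall n K s, (n <= N)%N -> s \in E K -> `|u n K s| <= M) ->
  (* phi2max = max of phi'' on [1/M, M] *)
  (exists x, 1 / M <= x <= M /\ (derive1 (derive1 phi)) x = phi2max) ->
  (forall x, 1 / M <= x <= M -> (derive1 (derive1 phi)) x <= phi2max) ->
  resid_L1 phi E vol area rho rhos u N dt
    <= M ^+ 2 * phi2max * tBV vol rho N * (dt / hmin K0 E vol area).
Proof.
move=> vol_gt0 area_gt0 faces_neq0 dt_gt0 phi_C2 phi_convex rho_gt0 rhos_itv
  M_gt1 rho_M u_M _ derive2_le.
have M_gt0 : 0 < M := lt_trans ltr01 M_gt1.
have invM_gt0 : 0 < 1 / M by rewrite divr_gt0.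
have rho_itv n K : (n <= N)%N -> 1 / M <= rho n K <= M.
  move=> le_nN; have [le_rhoM inv_le] := rho_M n K le_nN.
  by rewrite le_rhoM andbT ler_pdivrMr // mulrC -ler_pdivrMr ?rho_gt0.
set h := hmin K0 E vol area; have h_gt0 : 0 < h by exact: hmin_gt0.
rewrite /resid_L1 /tBV mulr_sumr mulrC mulr_sumr; apply: ler_sum => n _.
rewrite !mulr_sumr; apply: ler_sum => K _.
have /ltnW le_nN := ltn_ord n.
have jump_le := derive1_dist_le phi_convex phi_C2 invM_gt0 derive2_le
  (rho_itv _ K (ltn_ord n)) (rho_itv _ K le_nN).
have flux_le : `|\sum_(s in E K) flux area rhos u n K s| <= M ^+ 2 * (vol K / h).
  rewrite (le_trans _ (ler_wpM2l (sqr_ge0 M) (sum_area_le_hmin K0 vol_gt0 area_gt0 faces_neq0 K))) //.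
  apply: norm_sum_flux_le => [s|s sK]; first exact: ltW.
  have [L [L' /andP[le_Ls le_sL']]] := rhos_itv n K s le_nN sK.
  rewrite u_M // gtr0_norm ?(lt_le_trans (rho_gt0 n L le_nN)) //.
  by rewrite (le_trans le_sL') //; case: (rho_M n L' le_nN).
rewrite vol_mul_norm_resid // -[dt / h * _]mulrA; apply: ler_wpM2l; first exact: ltW.
have -> : h^-1 * (M ^+ 2 * phi2max * (vol K * `|rho n.+1 K - rho n K|))
  = phi2max * `|rho n.+1 K - rho n K| * (M ^+ 2 * (vol K / h)) by ring.
by apply: ler_pM jump_le flux_le.
Qed.
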